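(* For every $n\ge3$: - the number of pairs $(T,\{\ell_1,\ell_2\})$, with $T$ a plane tree on $n$ vertices and $\{\ell_1,\ell_2\}$ an unordered pair of distinct leaves of $T$, is $\frac{(2n-5)!}{((n-3)!)^2}$; - the sum of $d(\ell_1,\ell_2)$ over all such pairs is $(n-2)4^{n-3}+\frac{(2n-5)!}{((n-3)!)^2}$.
   Context: General (plane) trees are rooted trees in which each vertex may have any number of children, linearly ordered. The size of a tree is its number of vertices. A leaf is a vertex with no children; in particular the root of a tree with at least two vertices is not a leaf. $d(u,w)$ is the number of edges of the path between $u$ and $w$. *)

From mathcomp Require Import all_boot.
From Stdlib Require List.
Set Implicit Arguments. Unset Strict Implicit. Unset Printing Implicit Defensive.

Inductive ptree : Type := Node of seq ptree.

Fixpoint ptsize (t : ptree) : nat :=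
  let: Node ts := t in (sumn (map ptsize ts)).+1.

(* A vertex of a tree is addressed by the sequence of child indices on the
   path from the root.  [leaves t] lists the addresses of the leaves of t
   (vertices with no children), left to right; they are pairwise distinct. *)
Fixpoint leaves (t : ptree) : seq (seq nat) :=
  let: Node ts := t in
  match ts with
  | [::] => [:: [::]]
  | _ => (fix go (i : nat) (ts : seq ptree) : seq (seq nat) :=
            match ts with
            | [::] => [::]
            | u :: ts' => map (cons i) (leaves u) ++ go i.+1 ts'
            end) 0 ts
  end.

(* Length of the longest common prefix of two addresses
   (= depth of the lowest common ancestor). *)
Fixpoint lcp (p q : seq nat) : nat :=
  match p, q with
  | a :: p', b :: q' => if a == b then (lcp p' q').+1 else 0
  | _, _ => 0
  end.

Definition vdist (p q : seq nat) : nat := size p + size q - (lcp p q).*2.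

Fixpoint upairs (T : Type) (s : seq T) : seq (T * T) :=
  match s with
  | [::] => [::]
  | x :: s' => map (pair x) s' ++ upairs s'
  end.

Definition nleafpairs (t : ptree) : nat := size (upairs (leaves t)).

Definition sumleafdist (t : ptree) : nat :=
  sumn [seq vdist pq.1 pq.2 | pq <- upairs (leaves t)].

From HB Require Import structures.
From mathcomp Require Import all_boot all_algebra zify.
From Stdlib Require Import Ring FunctionalExtensionality.
From Stdlib Require List.
Set Implicit Arguments. Unset Strict Implicit. Unset Printing Implicit Defensive.
Import GRing.Theory.

(* A plane tree on n vertices is [Node F] for a forest F of total size n - 1,
   and a nonempty forest is a first tree [Node f] followed by a forest g.
   Following this decomposition, the generating functions C, L, S, P, D of
   forests counted by their number, number of leaves, sum of leaf depths,
   number of leaf pairs and sum of leaf distances satisfy algebraic equations.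
   With u = C (1 + L) one finds u^2 (1 - 4x) = 1, P = x^2 u^3 and
   D = x^2 (u^3 + u^4); the coefficients of u^3 and u^4 are (2m+1)!/m!^2 and
   (m+1) 4^m, the former via the differential equation x u' = 2 x u^3. *)

Lemma InE (T : eqType) (x : T) (s : seq T) : List.In x s <-> x \in s.
Proof.
elim: s => [|a s IH] //=; rewrite in_cons IH.
by split=> [[->|->]|/orP[/eqP->|]]; rewrite ?eqxx ?orbT; auto.
Qed.

Lemma uniq_NoDup (T : eqType) (s : seq T) : uniq s -> List.NoDup s.
Proof.
elim: s => [|a s IH] /=; first by constructor.
by case/andP=> a_s uniq_s; constructor; [rewrite InE; apply/negP | apply: IH].
Qed.

Fixpoint ptree_to_gtree (t : ptree) : GenTree.tree unit :=
  let: Node ts := t in GenTree.Node 0 (map ptree_to_gtree ts).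

Fixpoint gtree_to_ptree (g : GenTree.tree unit) : ptree :=
  match g with
  | GenTree.Leaf _ => Node [::]
  | GenTree.Node _ gs => Node (map gtree_to_ptree gs)
  end.

Fixpoint ptree_nested_ind (P : ptree -> Prop)
    (IH : forall ts, List.Forall P ts -> P (Node ts)) (t : ptree) : P t :=
  let: Node ts := t in
  IH ts ((fix all_ts (ts : seq ptree) : List.Forall P ts :=
            match ts with
            | [::] => List.Forall_nil P
            | u :: us => List.Forall_cons u (ptree_nested_ind IH u) (all_ts us)
            end) ts).

Lemma ptree_to_gtreeK : cancel ptree_to_gtree gtree_to_ptree.
Proof. by elim/ptree_nested_ind => ts IH /=; congr Node; elim: IH => //= u us -> _ ->. Qed.

HB.instance Definition _ := Equality.copy ptree (can_type ptree_to_gtreeK).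

Definition fsize (F : seq ptree) : nat := sumn (map ptsize F).

Lemma ptsize_Node F : ptsize (Node F) = (fsize F).+1.
Proof. by []. Qed.

Lemma fsize_cons t F : fsize (t :: F) = ptsize t + fsize F.
Proof. by []. Qed.

(* [forests_fuel k m] lists the forests of total size m, provided m <= k. *)
Fixpoint forests_fuel (k m : nat) : seq (seq ptree) :=
  match k, m with
  | _, 0 => [:: [::]]
  | 0, _ => [::]
  | k.+1, m.+1 =>
    flatten [seq [seq Node f :: g | f <- forests_fuel k a, g <- forests_fuel k (m - a)]
            | a <- iota 0 m.+1]
  end.

Lemma forests_fuelSS k m : forests_fuel k.+1 m.+1 =
  flatten [seq [seq Node f :: g | f <- forests_fuel k a, g <- forests_fuel k (m - a)]
          | a <- iota 0 m.+1].
Proof. by []. Qed.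

Definition forests (m : nat) : seq (seq ptree) := forests_fuel m m.

Lemma forests_fuel_succ k m : m <= k -> forests_fuel k.+1 m = forests_fuel k m.
Proof.
elim: k m => [|k IH] [|m] // lt_mk; rewrite !forests_fuelSS.
congr flatten; apply/eq_in_map => a.
rewrite mem_iota add0n => /andP[_ lt_am].
by rewrite (IH a) ?(IH (m - a)) //; lia.
Qed.

Lemma forests_fuelE k m : m <= k -> forests_fuel k m = forests m.
Proof.
move=> le_mk; rewrite -(subnKC le_mk) /forests.
by elim: (k - m) => [|d IH]; rewrite ?addn0 // addnS forests_fuel_succ ?leq_addr.
Qed.

Lemma forests0 : forests 0 = [:: [::]].
Proof. by []. Qed.

Lemma forestsS m : forests m.+1 =
  flatten [seq [seq Node f :: g | f <- forests a, g <- forests (m - a)] | a <- iota 0 m.+1].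
Proof.
rewrite /forests forests_fuelSS; congr flatten; apply/eq_in_map => a.
rewrite mem_iota add0n => /andP[_ lt_am].
by rewrite !forests_fuelE //; lia.
Qed.

Lemma mem_forests m F : (F \in forests m) = (fsize F == m).
Proof.
elim/ltn_ind: m F => -[|m] IH F.
  by rewrite forests0 inE; case: F => [|[ts] F].
rewrite forestsS; apply/flatten_mapP/eqP => [[a]|].
  rewrite mem_iota add0n => /andP[_ lt_am] /allpairsP[[f g] [/= f_a g_ma ->]].
  rewrite IH in f_a; last lia; rewrite IH in g_ma; last lia.
  rewrite fsize_cons ptsize_Node (eqP f_a) (eqP g_ma); lia.
case: F => [|[f] g] //; rewrite fsize_cons ptsize_Node => -[sz_fg].
exists (fsize f); first by rewrite mem_iota; lia.
apply/allpairsP; exists (f, g); rewrite /= !IH; [|lia..].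
by split=> //; apply/eqP; lia.
Qed.

Lemma uniq_flatten_key (A B : eqType) (key : B -> A) (s : seq A) (G : A -> seq B) :
    uniq s -> {in s, forall a, uniq (G a)} -> (forall a x, x \in G a -> key x = a) ->
  uniq (flatten [seq G a | a <- s]).
Proof.
move=> uniq_s uniq_G keyG; elim: s uniq_s uniq_G => //= a s IH /andP[a_s uniq_s] uniq_G.
rewrite cat_uniq uniq_G ?mem_head ?IH // => [|b b_s]; last by rewrite uniq_G // inE b_s orbT.
rewrite andbT; apply/hasPn => x /flatten_mapP[b b_s x_b]; apply/negP => x_a.
by move: a_s; rewrite -(keyG _ _ x_a) (keyG _ _ x_b) b_s.
Qed.

Lemma uniq_forests m : uniq (forests m).
Proof.
elim/ltn_ind: m => -[|m] IH //; rewrite forestsS.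
apply: (@uniq_flatten_key _ _ (fun F => if F is Node f :: _ then fsize f else 0)).
- exact: iota_uniq.
- move=> a; rewrite mem_iota add0n => /andP[_ lt_am].
  by apply: allpairs_uniq => [||[f g] [f' g'] _ _ /= [-> ->]] //; apply: IH; lia.
- move=> a _ /allpairsP[[f g] [/= f_a _ ->]].
  by apply/eqP; rewrite -mem_forests.
Qed.

Fixpoint child_leaves (i : nat) (ts : seq ptree) : seq (seq nat) :=
  if ts is u :: us then map (cons i) (leaves u) ++ child_leaves i.+1 us else [::].

Lemma leaves_Node ts : leaves (Node ts) = if ts is [::] then [:: [::]] else child_leaves 0 ts.
Proof. by case: ts. Qed.

Definition depthsum (s : seq (seq nat)) : nat := sumn (map size s).
Definition npairs (s : seq (seq nat)) : nat := size (upairs s).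
Definition distsum (s : seq (seq nat)) : nat := sumn [seq vdist p.1 p.2 | p <- upairs s].

Lemma npairs_cat s1 s2 : npairs (s1 ++ s2) = npairs s1 + npairs s2 + size s1 * size s2.
Proof.
rewrite /npairs; elim: s1 => [|a s1 IH] /=; first by rewrite addn0.
by rewrite !size_cat !size_map IH size_cat; lia.
Qed.

Lemma sumn_upairs_cat (h : seq nat -> seq nat -> nat) s1 s2 :
  sumn [seq h p.1 p.2 | p <- upairs (s1 ++ s2)] =
  sumn [seq h p.1 p.2 | p <- upairs s1] + sumn [seq h p.1 p.2 | p <- upairs s2]
  + sumn [seq h a b | a <- s1, b <- s2].
Proof.
elim: s1 => [|a s1 IH] /=; first by rewrite addn0.
by rewrite !map_cat !sumn_cat IH -!map_comp /comp /=; lia.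
Qed.

Lemma upairs_map (T U : Type) (g : T -> U) s :
  upairs (map g s) = [seq (g p.1, g p.2) | p <- upairs s].
Proof. by elim: s => //= a s ->; rewrite map_cat -!map_comp. Qed.

Lemma vdist_cons i p q : vdist (i :: p) (i :: q) = vdist p q.
Proof. by rewrite /vdist /= eqxx doubleS; lia. Qed.

Lemma vdist_cons_neq i j p q :
  i != j -> vdist (i :: p) (j :: q) = size (i :: p) + size (j :: q).
Proof. by move=> /negbTE neq_ij; rewrite /vdist /= neq_ij subn0. Qed.

Lemma depthsum_map_cons i s : depthsum (map (cons i) s) = depthsum s + size s.
Proof. by rewrite /depthsum; elim: s => //= p s ->; lia. Qed.

Lemma depthsum_cat s1 s2 : depthsum (s1 ++ s2) = depthsum s1 + depthsum s2.
Proof. by rewrite /depthsum map_cat sumn_cat. Qed.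

Lemma npairs_map_cons i s : npairs (map (cons i) s) = npairs s.
Proof. by rewrite /npairs upairs_map size_map. Qed.

Lemma distsum_map_cons i s : distsum (map (cons i) s) = distsum s.
Proof.
rewrite /distsum upairs_map -map_comp; congr sumn.
by apply: eq_map => -[p q] /=; rewrite vdist_cons.
Qed.

Lemma sumn_allpairs_add (f g : seq nat -> nat) s1 s2 :
  sumn [seq f a + g b | a <- s1, b <- s2] =
  size s2 * sumn (map f s1) + size s1 * sumn (map g s2).
Proof.
elim: s1 => [|a s1 IH] /=; first by rewrite muln0.
rewrite sumn_cat IH.
suff -> : sumn [seq f a + g b | b <- s2] = size s2 * f a + sumn (map g s2) by lia.
by elim: s2 {IH} => //= b s2 ->; lia.
Qed.

Lemma child_leaves_head_ge i ts :
  all (fun q => if q is j :: _ then i <= j else false) (child_leaves i ts).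
Proof.
elim: ts i => //= u us IH i; rewrite all_cat; apply/andP; split.
  by apply/allP => q /mapP[p _ ->].
by apply: sub_all (IH i.+1) => -[|j q] //; apply: ltnW.
Qed.

(* Leaves of distinct children meet only at the root, so their distance is
   the sum of their depths. *)
Lemma distsum_child_leaves_cons i u us :
  distsum (child_leaves i (u :: us)) =
  distsum (leaves u) + distsum (child_leaves i.+1 us)
  + size (child_leaves i.+1 us) * (depthsum (leaves u) + size (leaves u))
  + size (leaves u) * depthsum (child_leaves i.+1 us).
Proof.
rewrite /= {1}/distsum sumn_upairs_cat -/(distsum _) -/(distsum _) distsum_map_cons.
set s1 := map (cons i) (leaves u); set s2 := child_leaves i.+1 us.
have -> : sumn [seq vdist a b | a <- s1, b <- s2] =
          size s2 * depthsum s1 + size s1 * depthsum s2.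
  rewrite -sumn_allpairs_add; apply/congr1/eq_in_allpairs => _ q /mapP[p _ ->].
  move/(allP (child_leaves_head_ge i.+1 us)); case: q => // j q lt_ij.
  by rewrite vdist_cons_neq // neq_ltn lt_ij.
by rewrite depthsum_map_cons size_map addnA.
Qed.

Fixpoint forest_nleaves (F : seq ptree) : nat :=
  if F is u :: us then size (leaves u) + forest_nleaves us else 0.

Fixpoint forest_depthsum (F : seq ptree) : nat :=
  if F is u :: us then depthsum (leaves u) + size (leaves u) + forest_depthsum us else 0.

Fixpoint forest_npairs (F : seq ptree) : nat :=
  if F is u :: us then
    npairs (leaves u) + forest_npairs us + size (leaves u) * forest_nleaves us
  else 0.

Fixpoint forest_distsum (F : seq ptree) : nat :=
  if F is u :: us then
    distsum (leaves u) + forest_distsum us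
    + forest_nleaves us * (depthsum (leaves u) + size (leaves u))
    + size (leaves u) * forest_depthsum us
  else 0.

Lemma child_leaves_stats i F :
  [/\ size (child_leaves i F) = forest_nleaves F,
      depthsum (child_leaves i F) = forest_depthsum F,
      npairs (child_leaves i F) = forest_npairs F &
      distsum (child_leaves i F) = forest_distsum F].
Proof.
elim: F i => [|u us IH] i //; have [sz ds np dd] := IH i.+1.
rewrite distsum_child_leaves_cons /= size_cat npairs_cat depthsum_cat.
by rewrite depthsum_map_cons npairs_map_cons size_map sz ds np dd.
Qed.

Definition nleaves_node (F : seq ptree) : nat := (F == [::]) + forest_nleaves F.

Lemma Node_leaves_stats F :
  [/\ size (leaves (Node F)) = nleaves_node F,
      depthsum (leaves (Node F)) = forest_depthsum F,
      npairs (leaves (Node F)) = forest_npairs F &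
      distsum (leaves (Node F)) = forest_distsum F].
Proof.
rewrite leaves_Node /nleaves_node; case: F => [|u us] //.
by have [-> -> -> ->] := child_leaves_stats 0 (u :: us).
Qed.

Section FormalPowerSeries.
Local Open Scope ring_scope.

Definition fps := nat -> int.

Definition fps0 : fps := fun _ => 0.
Definition fps1 : fps := fun n => (n == 0%N)%:R.
Definition fpsX : fps := fun n => (n == 1%N)%:R.
Definition fps_add (f g : fps) : fps := fun n => f n + g n.
Definition fps_opp (f : fps) : fps := fun n => - f n.
Definition fps_sub (f g : fps) : fps := fun n => f n - g n.
Definition fps_mul (f g : fps) : fps := fun n => \sum_(i < n.+1) f i * g (n - i)%N.

(* Coefficients below n of a product only depend on coefficients below n,
   so the ring laws of [fps_mul] follow from those of polynomials. *)
Definition fps_trunc (n : nat) (f : fps) : {poly int} := \poly_(i < n) f i.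

Lemma fps_mul_trunc n f g k : (k < n)%N -> fps_mul f g k = (fps_trunc n f * fps_trunc n g)`_k.
Proof.
move=> lt_kn; rewrite coefM; apply: eq_bigr => i _; rewrite !coef_poly.
by rewrite !(leq_ltn_trans _ lt_kn) ?leq_subr // -ltnS.
Qed.

Lemma coef_trunc_fps_mul n f g k : (k <= n)%N ->
  (fps_trunc n.+1 (fps_mul f g))`_k = (fps_trunc n.+1 f * fps_trunc n.+1 g)`_k.
Proof. by move=> le_kn; rewrite coef_poly ltnS le_kn; apply: fps_mul_trunc. Qed.

Lemma coefMl_eq n (p q r : {poly int}) :
  (forall i, (i <= n)%N -> p`_i = q`_i) -> (p * r)`_n = (q * r)`_n.
Proof. by move=> eq_pq; rewrite !coefM; apply: eq_bigr => i _; rewrite eq_pq // -ltnS. Qed.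

Lemma fps_mulC f g : fps_mul f g = fps_mul g f.
Proof.
by apply: functional_extensionality => n; rewrite !(fps_mul_trunc _ _ (ltnSn n)) mulrC.
Qed.

Lemma fps_mulA f g h : fps_mul f (fps_mul g h) = fps_mul (fps_mul f g) h.
Proof.
apply: functional_extensionality => n; rewrite !(fps_mul_trunc _ _ (ltnSn n)) mulrC.
rewrite (coefMl_eq _ (coef_trunc_fps_mul g h)).
by rewrite (coefMl_eq _ (coef_trunc_fps_mul f g)) mulrC mulrA.
Qed.

Lemma fps_mul1 f : fps_mul fps1 f = f.
Proof.
apply: functional_extensionality => n.
by rewrite /fps_mul big_ord_recl subn0 mul1r big1 ?addr0 // => i _; rewrite mul0r.
Qed.

Lemma fps_mulDl f g h : fps_mul (fps_add f g) h = fps_add (fps_mul f h) (fps_mul g h).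
Proof.
apply: functional_extensionality => n.
by rewrite /fps_add -big_split; apply: eq_bigr => i _; rewrite mulrDl.
Qed.

Lemma fps_ring : ring_theory fps0 fps1 fps_add fps_mul fps_sub fps_opp (@eq fps).
Proof.
split; try (by move=> *; apply: functional_extensionality => n;
                 rewrite /fps_add /fps_opp /fps0 ?add0r ?addrA ?subrr // addrC).
- exact: fps_mul1.
- exact: fps_mulC.
- exact: fps_mulA.
- exact: fps_mulDl.
Qed.

End FormalPowerSeries.

Add Ring fps_ring : fps_ring.

Declare Scope fps_scope.
Delimit Scope fps_scope with F.
Notation "0" := fps0 : fps_scope.
Notation "1" := fps1 : fps_scope.
Notation "f + g" := (fps_add f g) : fps_scope.
Notation "f - g" := (fps_sub f g) : fps_scope.
Notation "f * g" := (fps_mul f g) : fps_scope.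
Notation X := fpsX.
Notation two := (1 + 1)%F.
Notation four := (two + two)%F.

Section FpsCoefficients.
Local Open Scope ring_scope.

Lemma fps_subr0_eq (f g : fps) : (f - g)%F = 0%F -> f = g.
Proof.
move=> fg0; apply: functional_extensionality => n.
by apply/eqP; rewrite -subr_eq0; apply/eqP; apply: (congr1 (fun h => h n) fg0).
Qed.

Lemma coef_fps_mul0 f g : (f * g)%F 0%N = f 0%N * g 0%N.
Proof. by rewrite /fps_mul big_ord_recl big_ord0 addr0. Qed.

Lemma coef_fpsXM0 f : (X * f)%F 0%N = 0.
Proof. by rewrite coef_fps_mul0 mul0r. Qed.

Lemma coef_fpsXMS f n : (X * f)%F n.+1 = f n.
Proof.
rewrite /fps_mul !big_ord_recl /= mul0r add0r mul1r subn1.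
by rewrite big1 ?addr0 // => i _; rewrite mul0r.
Qed.

Lemma coef_fpsXXM f m : (X * X * f)%F m.+2 = f m.
Proof. by rewrite (_ : X * X * f = X * (X * f))%F ?coef_fpsXMS //; ring. Qed.

Lemma coef_fps_mul_1m4X f n : (f * (1 - four * X))%F n.+1 = f n.+1 - 4%:Z * f n.
Proof.
have -> : (f * (1 - four * X) = f - X * (f + f + f + f))%F by ring.
by rewrite /fps_sub coef_fpsXMS /fps_add; congr (_ - _); lia.
Qed.

Lemma coef_fps_mul_1m4X0 f : (f * (1 - four * X))%F 0%N = f 0%N.
Proof.
have -> : (f * (1 - four * X) = f - X * (f + f + f + f))%F by ring.
by rewrite /fps_sub coef_fpsXM0 subr0.
Qed.

Lemma fps_two_inj f : (two * f)%F = 0%F -> f = 0%F.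
Proof.
have -> : (two * f = f + f)%F by ring.
move=> ff0; apply: functional_extensionality => n.
by have := congr1 (fun h => h n) ff0; rewrite /fps_add /fps0; lia.
Qed.

Definition fps_xderiv (f : fps) : fps := fun n => n%:R * f n.

Lemma fps_xderivM f g :
  fps_xderiv (f * g)%F = (fps_xderiv f * g + f * fps_xderiv g)%F.
Proof.
apply: functional_extensionality => n.
rewrite /fps_xderiv /fps_mul /fps_add -big_split mulr_sumr; apply: eq_bigr => i _.
have le_in : (i <= n)%N by rewrite -ltnS.
by rewrite -{1}(subnKC le_in) natrD mulrDl -mulrA [f i * (_ * _)]mulrCA.
Qed.

Lemma fps_xderivD f g : fps_xderiv (f + g)%F = (fps_xderiv f + fps_xderiv g)%F.
Proof. by apply: functional_extensionality => n; rewrite /fps_xderiv /fps_add mulrDr. Qed.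

Lemma fps_xderivB f g : fps_xderiv (f - g)%F = (fps_xderiv f - fps_xderiv g)%F.
Proof. by apply: functional_extensionality => n; rewrite /fps_xderiv /fps_sub mulrBr. Qed.

Lemma fps_xderiv1 : fps_xderiv 1%F = 0%F.
Proof. by apply: functional_extensionality => -[|n]; rewrite /fps_xderiv /= ?mul0r ?mulr0. Qed.

Lemma fps_xderivX : fps_xderiv X = X.
Proof.
by apply: functional_extensionality => -[|[|n]]; rewrite /fps_xderiv /= ?mul0r ?mulr0 ?mul1r.
Qed.

End FpsCoefficients.

Section GeneratingFunctions.
Local Open Scope ring_scope.

Definition gf (q : seq ptree -> nat) : fps := fun m => \sum_(F <- forests m) (q F)%:Z.

Lemma gf_ext q1 q2 : q1 =1 q2 -> gf q1 = gf q2.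
Proof.
by move=> eq_q; apply: functional_extensionality => m; apply: eq_bigr => F _; rewrite eq_q.
Qed.

Lemma gfD q1 q2 : gf (fun F => q1 F + q2 F)%N = (gf q1 + gf q2)%F.
Proof.
by apply: functional_extensionality => m; rewrite /gf /fps_add -big_split; apply: eq_bigr.
Qed.

Lemma gf_nil : gf (fun F => nat_of_bool (F == [::])) = 1%F.
Proof.
apply: functional_extensionality => -[|m]; first by rewrite /gf forests0 big_seq1.
by rewrite /gf big_seq big1 // => -[|t F]; rewrite mem_forests.
Qed.

Lemma big_forestsS (h : seq ptree -> int) m :
  \sum_(F <- forests m.+1) h F =
  \sum_(i < m.+1) \sum_(f <- forests i) \sum_(g <- forests (m - i)) h (Node f :: g).
Proof.
rewrite forestsS big_flatten big_map /= -(big_mkord xpredT (fun i =>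
  \sum_(f <- forests i) \sum_(g <- forests (m - i)) h (Node f :: g))) /index_iota subn0.
by apply: eq_bigr => i _; rewrite big_allpairs_dep.
Qed.

Definition headtail_mul (A B : seq ptree -> nat) (F : seq ptree) : nat :=
  if F is Node f :: g then A f * B g else 0.

Lemma gf_headtail_mul A B : gf (headtail_mul A B) = (X * (gf A * gf B))%F.
Proof.
apply: functional_extensionality => -[|m].
  by rewrite coef_fpsXM0 /gf forests0 big_seq1.
rewrite coef_fpsXMS /gf big_forestsS; apply: eq_bigr => i _.
rewrite mulr_suml; apply: eq_bigr => f _; rewrite mulr_sumr; apply: eq_bigr => g _.
by rewrite PoszM.
Qed.

Local Open Scope fps_scope.

Definition gf_count := gf (fun _ => 1%N).
Definition gf_leaves := gf forest_nleaves.
Definition gf_depths := gf forest_depthsum.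
Definition gf_pairs := gf forest_npairs.
Definition gf_dists := gf forest_distsum.

Lemma gf_nleaves_node : gf nleaves_node = 1 + gf_leaves.
Proof. by rewrite gfD gf_nil. Qed.

Lemma gf_count_eq : gf_count = 1 + X * gf_count * gf_count.
Proof.
rewrite {1}/gf_count (gf_ext (q2 := fun F =>
  (F == [::]) + headtail_mul (fun _ => 1) (fun _ => 1) F)%N).
  by rewrite gfD gf_nil gf_headtail_mul -/gf_count; ring.
by case=> [|[f] g].
Qed.

Lemma gf_leaves_eq :
  gf_leaves = X * (gf_leaves * gf_count + gf_count * gf_leaves + gf_count).
Proof.
rewrite {1}/gf_leaves (gf_ext (q2 := fun F =>
  headtail_mul nleaves_node (fun _ => 1) F + headtail_mul (fun _ => 1) forest_nleaves F)%N).
  by rewrite gfD !gf_headtail_mul gf_nleaves_node -/gf_count -/gf_leaves; ring.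
case=> [|[f] g] //=; have [-> _ _ _] := Node_leaves_stats f; lia.
Qed.

Lemma gf_depths_eq : gf_depths =
  X * (gf_depths * gf_count + gf_count * gf_depths + (1 + gf_leaves) * gf_count).
Proof.
rewrite {1}/gf_depths (gf_ext (q2 := fun F =>
  headtail_mul (fun f => forest_depthsum f + nleaves_node f) (fun _ => 1) F
  + headtail_mul (fun _ => 1) forest_depthsum F)%N).
  by rewrite gfD !gf_headtail_mul gfD gf_nleaves_node -/gf_count -/gf_depths; ring.
case=> [|[f] g] //=; have [-> -> _ _] := Node_leaves_stats f; lia.
Qed.

Lemma gf_pairs_eq : gf_pairs =
  X * (gf_pairs * gf_count + gf_count * gf_pairs + (1 + gf_leaves) * gf_leaves).
Proof.
rewrite {1}/gf_pairs (gf_ext (q2 := fun F =>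
  headtail_mul forest_npairs (fun _ => 1) F + headtail_mul (fun _ => 1) forest_npairs F
  + headtail_mul nleaves_node forest_nleaves F)%N).
  by rewrite !gfD !gf_headtail_mul gf_nleaves_node -/gf_count -/gf_leaves -/gf_pairs; ring.
case=> [|[f] g] //=; have [-> _ -> _] := Node_leaves_stats f; lia.
Qed.

Lemma gf_dists_eq : gf_dists =
  X * (gf_dists * gf_count + gf_count * gf_dists
       + ((gf_depths + (1 + gf_leaves)) * gf_leaves + (1 + gf_leaves) * gf_depths)).
Proof.
rewrite {1}/gf_dists (gf_ext (q2 := fun F =>
  headtail_mul forest_distsum (fun _ => 1) F + headtail_mul (fun _ => 1) forest_distsum F
  + headtail_mul (fun f => forest_depthsum f + nleaves_node f) forest_nleaves F
  + headtail_mul nleaves_node forest_depthsum F)%N).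
  rewrite !gfD !gf_headtail_mul gfD gf_nleaves_node.
  by rewrite -/gf_count -/gf_leaves -/gf_depths -/gf_dists; ring.
case=> [|[f] g] //=; have [-> -> _ ->] := Node_leaves_stats f; lia.
Qed.

End GeneratingFunctions.

Section SolveEquations.
Local Open Scope fps_scope.

(* [sqr14] and [isqr14] are the series sqrt (1 - 4x) and 1 / sqrt (1 - 4x). *)
Definition sqr14 : fps := 1 - two * X * gf_count.
Definition isqr14 : fps := gf_count * (1 + gf_leaves).

Lemma gf_count_mul_1mXC : gf_count * (1 - X * gf_count) = 1.
Proof.
transitivity (gf_count - X * gf_count * gf_count); first by ring.
by rewrite {1}gf_count_eq; ring.
Qed.

Lemma fixpoint_mul_sqr14 F R : F = X * (F * gf_count + gf_count * F + R) -> F * sqr14 = X * R.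
Proof.
move=> eqF; transitivity (F - X * (F * gf_count + gf_count * F)); first by rewrite /sqr14; ring.
by rewrite {1}eqF; ring.
Qed.

Lemma isqr14K : isqr14 * sqr14 = 1.
Proof.
transitivity (gf_count * (sqr14 + gf_leaves * sqr14)); first by rewrite /isqr14; ring.
rewrite (fixpoint_mul_sqr14 gf_leaves_eq) -gf_count_mul_1mXC /sqr14; ring.
Qed.

Lemma fixpoint_closed F R : F = X * (F * gf_count + gf_count * F + R) -> F = X * R * isqr14.
Proof.
move=> /fixpoint_mul_sqr14 <-; transitivity (F * (isqr14 * sqr14)); last by ring.
by rewrite isqr14K; ring.
Qed.

Lemma sqr14_sqr : sqr14 * sqr14 = 1 - four * X.
Proof.
transitivity (1 - four * X * (gf_count * (1 - X * gf_count))); first by rewrite /sqr14; ring.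
by rewrite gf_count_mul_1mXC; ring.
Qed.

Lemma isqr14_sqr : isqr14 * isqr14 * (1 - four * X) = 1.
Proof.
rewrite -sqr14_sqr; transitivity ((isqr14 * sqr14) * (isqr14 * sqr14)); first by ring.
by rewrite isqr14K; ring.
Qed.

Lemma gf_leaves_closed : gf_leaves = X * gf_count * isqr14.
Proof. exact: fixpoint_closed gf_leaves_eq. Qed.

Lemma one_add_gf_leaves : 1 + gf_leaves = isqr14 * (1 - X * gf_count).
Proof.
transitivity ((1 + gf_leaves) * (gf_count * (1 - X * gf_count))).
  by rewrite gf_count_mul_1mXC; ring.
by rewrite /isqr14; ring.
Qed.

Lemma gf_depths_closed : gf_depths = X * isqr14 * isqr14.
Proof. by rewrite (fixpoint_closed gf_depths_eq) /isqr14; ring. Qed.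

Lemma one_add_gf_leaves_mul : (1 + gf_leaves) * gf_leaves = X * isqr14 * isqr14.
Proof.
rewrite one_add_gf_leaves gf_leaves_closed.
transitivity (X * isqr14 * isqr14 * (gf_count * (1 - X * gf_count))); first by ring.
by rewrite gf_count_mul_1mXC; ring.
Qed.

Lemma gf_pairs_closed : gf_pairs = X * X * (isqr14 * isqr14 * isqr14).
Proof. by rewrite (fixpoint_closed gf_pairs_eq) one_add_gf_leaves_mul; ring. Qed.

Lemma gf_dists_closed :
  gf_dists = X * X * (isqr14 * isqr14 * isqr14 + isqr14 * isqr14 * isqr14 * isqr14).
Proof.
rewrite (fixpoint_closed gf_dists_eq).
have -> : (gf_depths + (1 + gf_leaves)) * gf_leaves + (1 + gf_leaves) * gf_depths =
          gf_depths * gf_leaves + (1 + gf_leaves) * gf_leaves + (1 + gf_leaves) * gf_depths.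
  by ring.
rewrite one_add_gf_leaves_mul one_add_gf_leaves gf_depths_closed gf_leaves_closed; ring.
Qed.

End SolveEquations.

Section CentralBinomialSeries.
Local Open Scope fps_scope.

Lemma fps_xderiv_sqr_1m4X f : fps_xderiv (f * f * (1 - four * X)) =
  two * f * (fps_xderiv f * (1 - four * X) - two * X * f).
Proof.
by rewrite !fps_xderivM fps_xderivB fps_xderivM !fps_xderivD fps_xderiv1 fps_xderivX; ring.
Qed.

(* Apply x d/dx to u^2 (1 - 4x) = 1 and cancel the factor 2 u. *)
Lemma xderiv_isqr14_1m4X : fps_xderiv isqr14 * (1 - four * X) = two * X * isqr14.
Proof.
set Y := fps_xderiv isqr14 * (1 - four * X) - two * X * isqr14.
have uY0 : isqr14 * Y = 0.
  apply: fps_two_inj; transitivity (fps_xderiv (isqr14 * isqr14 * (1 - four * X))).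
    by rewrite fps_xderiv_sqr_1m4X /Y; ring.
  by rewrite isqr14_sqr fps_xderiv1.
apply: fps_subr0_eq; transitivity (isqr14 * Y * sqr14 - Y * (isqr14 * sqr14 - 1)).
  by rewrite /Y; ring.
by rewrite uY0 isqr14K; ring.
Qed.

Lemma xderiv_isqr14 : fps_xderiv isqr14 = two * X * (isqr14 * isqr14 * isqr14).
Proof.
transitivity (fps_xderiv isqr14 * (isqr14 * isqr14 * (1 - four * X))).
  by rewrite isqr14_sqr; ring.
transitivity (fps_xderiv isqr14 * (1 - four * X) * (isqr14 * isqr14)); first by ring.
by rewrite xderiv_isqr14_1m4X; ring.
Qed.

Local Open Scope ring_scope.

Lemma fps_mul_1m4X_coef f g : (f * (1 - four * X))%F = g ->
  f 0%N = g 0%N /\ forall n, f n.+1 = g n.+1 + 4%:Z * f n.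
Proof.
move=> <-; rewrite coef_fps_mul_1m4X0; split=> // n.
by rewrite coef_fps_mul_1m4X subrK.
Qed.

Lemma coef_isqr14_sqr n : (isqr14 * isqr14)%F n = (4 ^ n)%:Z.
Proof.
have [coef0 coefS] := fps_mul_1m4X_coef isqr14_sqr.
by elim: n => [|n IH]; rewrite ?coef0 // coefS IH expnS PoszM.
Qed.

Lemma coef_isqr14_4 n : (isqr14 * isqr14 * isqr14 * isqr14)%F n = (n.+1 * 4 ^ n)%:Z.
Proof.
have : (isqr14 * isqr14 * isqr14 * isqr14 * (1 - four * X))%F = (isqr14 * isqr14)%F.
  transitivity (isqr14 * isqr14 * (isqr14 * isqr14 * (1 - four * X)))%F; first by ring.
  by rewrite isqr14_sqr; ring.
case/fps_mul_1m4X_coef => coef0 coefS.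
elim: n => [|n IH]; first by rewrite coef0 coef_isqr14_sqr.
by rewrite coefS IH coef_isqr14_sqr !expnS !PoszM; lia.
Qed.

Lemma coef_isqr14_0 : isqr14 0%N = 1.
Proof. by rewrite /isqr14 coef_fps_mul0 /fps_add /gf_count /gf_leaves /gf forests0 !big_seq1. Qed.

Lemma coef_isqr14S n : n.+1%:R * isqr14 n.+1 = (4 * n + 2)%:R * isqr14 n.
Proof.
have := congr1 (fun h => h n.+1) xderiv_isqr14_1m4X.
rewrite coef_fps_mul_1m4X (_ : two * X * isqr14 = X * (isqr14 + isqr14))%F; last by ring.
by rewrite coef_fpsXMS /fps_add /fps_xderiv => /eqP; rewrite subr_eq => /eqP ->; lia.
Qed.

Lemma coef_isqr14_fact n : isqr14 n * (n`!)%:R * (n`!)%:R = ((2 * n)`!)%:R :> int.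
Proof.
elim: n => [|n IH]; first by rewrite coef_isqr14_0.
rewrite (_ : 2 * n.+1 = (2 * n).+2)%N; last lia.
rewrite !factS !natrM; move: IH (coef_isqr14S n).
set a := isqr14 n; set b := isqr14 n.+1; set F := (n`!)%:R; set G := ((2 * n)`!)%:R.
move=> IH rec.
have -> : b * (n.+1%:R * F) * (n.+1%:R * F) = n.+1%:R * F * F * (n.+1%:R * b) :> int by lia.
rewrite rec (_ : n.+1%:R * F * F * ((4 * n + 2)%:R * a) =
                 n.+1%:R * (4 * n + 2)%:R * (a * F * F) :> int); last by lia.
by rewrite IH; lia.
Qed.

Lemma coef_isqr14_3S n :
  n.+1%:R * isqr14 n.+1 = (isqr14 * isqr14 * isqr14)%F n + (isqr14 * isqr14 * isqr14)%F n.
Proof.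
have := congr1 (fun h => h n.+1) xderiv_isqr14.
rewrite (_ : two * X * (isqr14 * isqr14 * isqr14) =
             X * (isqr14 * isqr14 * isqr14 + isqr14 * isqr14 * isqr14))%F; last by ring.
by rewrite coef_fpsXMS.
Qed.

Lemma coef_isqr14_3_fact n :
  (isqr14 * isqr14 * isqr14)%F n * (n`!)%:R * (n`!)%:R = ((2 * n).+1`!)%:R :> int.
Proof.
have rec := coef_isqr14_3S n; have fact := coef_isqr14_fact n.+1.
rewrite (factS n) (_ : 2 * n.+1 = ((2 * n).+1).+1)%N in fact; last lia.
rewrite (factS (2 * n).+1) in fact; move: rec fact.
set p := (isqr14 * isqr14 * isqr14)%F n; set b := isqr14 n.+1.
move: (n`!) ((2 * n).+1`!) => F H; rewrite !natrM => rec fact.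
have nz : (2 * n).+2%:R != 0 :> int by apply/eqP; lia.
apply: (mulIf nz).
have reorder : b * (n.+1%:R * F%:R) * (n.+1%:R * F%:R) =
                n.+1%:R * F%:R * F%:R * (n.+1%:R * b) :> int by lia.
by rewrite reorder rec in fact; lia.
Qed.

End CentralBinomialSeries.

Definition trees (n : nat) : seq ptree := map Node (forests n.-1).

Lemma Node_inj : injective Node.
Proof. by move=> F G []. Qed.

Lemma uniq_trees n : uniq (trees n).
Proof. by rewrite map_inj_uniq ?uniq_forests //; apply: Node_inj. Qed.

Lemma mem_trees n t : 0 < n -> (t \in trees n) = (ptsize t == n).
Proof.
case: t => F n_gt0; rewrite mem_map ?mem_forests ?ptsize_Node; last exact: Node_inj.
by apply/eqP/eqP; lia.
Qed.

Lemma sumn_trees (s : ptree -> nat) (q : seq ptree -> nat) m :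
  (forall F, s (Node F) = q F) -> Posz (sumn (map s (trees m.+1))) = gf q m.
Proof.
move=> sq; rewrite /gf -map_comp; elim: (forests m) => [|F Fs IH]; first by rewrite big_nil.
by rewrite big_cons /= PoszD IH sq.
Qed.

Lemma sumn_nleafpairs_trees_coef m :
  Posz (sumn (map nleafpairs (trees m.+3))) = (isqr14 * isqr14 * isqr14)%F m.
Proof.
rewrite (@sumn_trees _ forest_npairs) => [|F]; last by have [_ _ <- _] := Node_leaves_stats F.
by rewrite -/gf_pairs gf_pairs_closed coef_fpsXXM.
Qed.

Lemma sumn_nleafpairs_trees m :
  sumn (map nleafpairs (trees m.+3)) * m`! ^ 2 = (2 * m).+1`!.
Proof.
have := coef_isqr14_3_fact m; rewrite -sumn_nleafpairs_trees_coef.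
by move: (sumn _) (m`!) ((2 * m).+1`!) => a b c; lia.
Qed.

Lemma sumn_sumleafdist_trees m : sumn (map sumleafdist (trees m.+3)) =
  m.+1 * 4 ^ m + sumn (map nleafpairs (trees m.+3)).
Proof.
have : Posz (sumn (map sumleafdist (trees m.+3))) =
       ((isqr14 * isqr14 * isqr14)%F m + (isqr14 * isqr14 * isqr14 * isqr14)%F m)%R.
  rewrite (@sumn_trees _ forest_distsum) => [|F]; last by have [_ _ _ <-] := Node_leaves_stats F.
  by rewrite -/gf_dists gf_dists_closed coef_fpsXXM.
rewrite -sumn_nleafpairs_trees_coef coef_isqr14_4.
by move: (sumn _) (sumn _) => a b; lia.
Qed.

Theorem proposition3p4 (n : nat) (hn : 3 <= n) :
  exists s : list ptree,
    List.NoDup s /\ (forall t, List.In t s <-> ptsize t = n) /\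
    sumn (map nleafpairs s) = (2 * n - 5)`! %/ ((n - 3)`! ^ 2) /\
    sumn (map sumleafdist s) =
      (n - 2) * 4 ^ (n - 3) + (2 * n - 5)`! %/ ((n - 3)`! ^ 2).
Proof.
exists (trees n); split; first exact/uniq_NoDup/uniq_trees.
split; first by move=> t; rewrite InE mem_trees; [split=> [/eqP|->] | lia].
have [m ->] : exists m, n = m.+3 by exists (n - 3); lia.
have -> : 2 * m.+3 - 5 = (2 * m).+1 by lia.
rewrite !subSS subn0.
rewrite -sumn_nleafpairs_trees mulnK ?expn_gt0 ?fact_gt0 //.
by split=> //; apply: sumn_sumleafdist_trees.
Qed.
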